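(* For every model class $\mathcal M\subseteq\mathcal M^+$, every $\gamma>0$ and every $\bar M\in\mathcal M^+$, $$\mathrm{dec}^{\mathrm o}_{\mathrm r,\gamma}(\mathcal M,\bar M)\le\mathrm{dec}^{\mathrm c}_{\mathrm r,\gamma^{-1/2}}(\mathcal M,\bar M).$$
   Context: Models are kernels $M:\Pi\to\Delta([0,1]\times\mathcal O)$ (rewards in $[0,1]$); $\mathcal M^+$ is the set of all models. $f^M(\pi)=\mathbb E_{(r,o)\sim M(\pi)}[r]$, $\pi_M\in\arg\max f^M$, $g^M(\pi)=f^M(\pi_M)-f^M(\pi)$; $D^2_H$ is squared Hellinger distance. Constrained regret DEC $\mathrm{dec}^{\mathrm c}_{\mathrm r,\varepsilon}(\mathcal M,\bar M)=\inf_{p\in\Delta(\Pi)}\sup_{M\in\mathcal M}\{\mathbb E_{\pi\sim p}[g^M(\pi)]:\mathbb E_{\pi\sim p}[D^2_H(M(\pi),\bar M(\pi))]\le\varepsilon^2\}$ (value $0$ if empty); offset regret DEC $\mathrm{dec}^{\mathrm o}_{\mathrm r,\gamma}(\mathcal M,\bar M)=\inf_{p\in\Delta(\Pi)}\sup_{M\in\mathcal M}\mathbb E_{\pi\sim p}[g^M(\pi)-\gamma D^2_H(M(\pi),\bar M(\pi))]$. *)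

From HB Require Import structures.
From mathcomp Require Import all_boot all_algebra.
From mathcomp Require Import all_classical all_reals all_analysis.
From mathcomp Require Import measurable_realfun lebesgue_integral charge.
Import GRing.Theory Num.Theory.

Set Implicit Arguments.
Unset Strict Implicit.
Unset Printing Implicit Defensive.

Local Open Scope classical_set_scope.
Local Open Scope ring_scope.
Local Open Scope ereal_scope.
Local Open Scope charge_scope.

Section hellinger.
Context d (T : measurableType d) (R : realType) (P Q : probability T R).

Definition hell_dom : set T -> \bar R := measure_add P Q.
HB.instance Definition _ := Measure.on hell_dom.

Lemma hell_dom_fin : fin_num_fun hell_dom.
Proof.
move=> A mA; rewrite /hell_dom measure_addE fin_numD.
by rewrite !fin_num_measure.
Qed.

HB.instance Definition _ := @Measure_isFinite.Build _ _ _ hell_dom hell_dom_fin.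

Definition hellinger2 : \bar R :=
  \int[hell_dom]_x
    ((Num.sqrt (fine ('d (charge_of_finite_measure P) '/d hell_dom x))
      - Num.sqrt (fine ('d (charge_of_finite_measure Q) '/d hell_dom x))) ^+ 2)%:E.

End hellinger.

(* Models: probability (Markov) kernels Pi -> Delta([0,1] x O),
   i.e. pi |-> M pi is a probability, measurable in pi.  A reward-      *)
(* observation pair is an element of R * O; the kernel is required to   *)
Definition is_kernel d d' (Pi : measurableType d) (Y : measurableType d')
  (R : realType) (k : Pi -> probability Y R) : Prop :=
  forall U, measurable U -> measurable_fun [set: Pi] (k ^~ U).

Record model d d' (Pi : measurableType d) (O : measurableType d') (R : realType)
  := Model {
  model_kernel :> Pi -> probability (R * O)%type R ;
  model_measurable : is_kernel model_kernel ;
  model_reward01 : forall pi : Pi,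
      model_kernel pi [set z : R * O | (0 <= z.1 <= 1)%R] = 1
}.

Section dec.
Context d d' (Pi : measurableType d) (O : measurableType d') (R : realType).
Local Notation model := (model Pi O R).

Definition fM (M : model) (pi : Pi) : \bar R :=
  \int[M pi]_z (z.1)%:E.

Definition gM (M : model) (pi : Pi) : \bar R :=
  ereal_sup (range (fM M)) - fM M pi.

Definition hellM (M Mbar : model) (pi : Pi) : \bar R :=
  hellinger2 (M pi) (Mbar pi).

Definition dec_o (gamma : R) (MM : set model) (Mbar : model) : \bar R :=
  ereal_inf (range (fun p : probability Pi R =>
    ereal_sup [set \int[p]_pi (gM M pi - gamma%:E * hellM M Mbar pi)
              | M in MM])).

(* constrained regret DEC (value 0 when the constraint set is empty) *)
Definition dec_c (eps : R) (MM : set model) (Mbar : model) : \bar R :=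
  ereal_inf (range (fun p : probability Pi R =>
    let S := [set \int[p]_pi gM M pi
             | M in [set M | MM M /\
                      \int[p]_pi hellM M Mbar pi <= (eps ^+ 2)%:E]] in
    if `[< S = set0 >] then 0 else ereal_sup S)).

End dec.

(** If the expected Hellinger distance of [M] under [p] is at most [1/gamma], [M] is
    admissible for the constrained DEC with [eps = gamma^(-1/2)] and its offset term is
    bounded by its plain regret.  Otherwise the penalty [gamma * E_p[D_H^2]] exceeds
    [1 >= E_p[g^M]], so the offset term is negative, while the constrained DEC is
    nonnegative because regrets are. *)

From mathcomp Require Import all_boot all_algebra.
From mathcomp Require Import all_classical all_reals all_analysis.
From mathcomp Require Import measurable_realfun lebesgue_integral charge.
From mathcomp Require Import all_order lra.
Import GRing.Theory Num.Theory Order.TTheory HBNNSimple.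

Set Implicit Arguments.
Unset Strict Implicit.
Unset Printing Implicit Defensive.

Local Open Scope classical_set_scope.
Local Open Scope ring_scope.
Local Open Scope ereal_scope.

Section integral_monotone.
Context d (T : measurableType d) (R : realType) (mu : {measure set T -> \bar R}).

(* No measurability is needed: the integral is a difference of suprema over simple
   functions, and both suprema are monotone. *)
Lemma le_integral_pointwise (D : set T) (f1 f2 : T -> \bar R) :
  (forall x, D x -> f1 x <= f2 x) ->
  \int[mu]_(x in D) f1 x <= \int[mu]_(x in D) f2 x.
Proof.
move=> f12.
have f12D : {in [set: T], forall x, (f1 \_ D) x <= (f2 \_ D) x}.
  by move=> x _; rewrite /patch; case: ifP => // /set_mem /f12.
rewrite /integral; apply: leeB; apply: ereal_sup_le => _ [h hf <-];
  exists h => //= x; apply: le_trans (hf x) _.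
- by apply: funepos_le f12D _ _; rewrite inE.
- by apply: funeneg_le f12D _ _; rewrite inE.
Qed.

Lemma ge0_integral_gt_nnsfun (f : T -> \bar R) (a : \bar R) :
  (forall x, 0 <= f x) -> a < \int[mu]_x f x ->
  exists2 s : {nnsfun T >-> R},
    (forall x, (s x)%:E <= f x) & a < \int[mu]_x (s x)%:E.
Proof.
move=> f0; rewrite ge0_integralTE // => /ereal_sup_gt[_ [s sf <-] lts].
by exists s => //; rewrite integralT_nnsfun.
Qed.

End integral_monotone.

Section probability_integral.
Context d (T : measurableType d) (R : realType) (P : probability T R).

Lemma ae_unit_interval_integral (f : T -> R) :
  measurable_fun setT f -> (\forall x \ae P, 0 <= f x <= 1)%R ->
  0 <= \int[P]_x (f x)%:E <= 1.
Proof.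
move=> mf f01; have mfE : measurable_fun setT (EFin \o f) by exact/measurable_EFinP.
have neg0 : \int[P]_x (EFin \o f)^\- x = 0.
  apply/eqP; rewrite eq_le integral_ge0 // andbT.
  apply: le_trans (_ : \int[P]_x (cst 0 x) <= 0); last by rewrite integral_cst // mul0e.
  apply: ae_ge0_le_integral => //; first exact: measurable_funeneg.
  apply: filterS f01 => x /andP[f0 _] _.
  by rewrite funenegE /= ge_max lee_fin oppr_le0 f0 lexx.
have pos1 : \int[P]_x (EFin \o f)^\+ x <= 1.
  apply: le_trans (_ : \int[P]_x (cst 1 x) <= 1).
    apply: ae_ge0_le_integral => //; first exact: measurable_funepos.
    apply: filterS f01 => x /andP[_ f1] _.
    by rewrite funeposE /= ge_max lee_fin f1 lee01.
  by rewrite integral_cst // mul1e probability_le1.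
by rewrite integralE neg0 sube0 pos1 andbT integral_ge0.
Qed.

(* The witness is a simple function [s <= h] whose integral already exceeds [1/gamma];
   unlike [h], it is integrable, so linearity applies to [1 - gamma * s]. *)
Lemma integral_offset_le0 (f h : T -> \bar R) (gamma : R) :
  (0 < gamma)%R -> (forall x, f x <= 1) -> (forall x, 0 <= h x) ->
  gamma^-1%:E < \int[P]_x h x -> \int[P]_x (f x - gamma%:E * h x) <= 0.
Proof.
move=> g0 f1 h0 /(ge0_integral_gt_nnsfun h0)[s sh lts].
have int1 : P.-integrable setT (cst 1).
  exact: finite_measure_integrable_cst.
have ints : P.-integrable setT (EFin \o s).
  apply: measurable_bounded_integrable => //; last exact: simple_bounded.
  by rewrite (le_lt_trans (probability_le1 P measurableT)) ?ltry.
apply: le_trans (_ : \int[P]_x (cst 1 x - gamma%:E * (EFin \o s) x) <= 0).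
  apply: le_integral_pointwise => x _; apply: leeB => //.
  by apply: lee_wpmul2l (sh x); rewrite lee_fin ltW.
rewrite integralB //; last exact: integrableZl.
rewrite integralZl // integral_cst // [X in 1 * X](probability_setT P) mul1e.
by move: lts; rewrite sube_le0 -[X in X < _]mule1 lte_pdivrMl // => /ltW.
Qed.

End probability_integral.

(* The inner value of [dec_c] for a fixed [p]; the default [0] replaces
   [ereal_sup set0 = -oo]. *)
Definition ereal_sup0 (R : realType) (S : set (\bar R)) : \bar R :=
  if `[< S = set0 >] then 0 else ereal_sup S.

Lemma ereal_sup0_ubound (R : realType) (S : set (\bar R)) (y : \bar R) :
  S y -> y <= ereal_sup0 S.
Proof.
move=> Sy; rewrite /ereal_sup0; case: asboolP => [S0|_]; last exact: ereal_sup_ubound.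
by move: Sy; rewrite S0.
Qed.

Lemma ereal_sup0_ge0 (R : realType) (S : set (\bar R)) :
  (forall y, S y -> 0 <= y) -> 0 <= ereal_sup0 S.
Proof.
move=> S0; have [->|/set0P[y Sy]] := eqVneq S set0.
  by rewrite /ereal_sup0 asboolT.
exact: le_trans (S0 _ Sy) (ereal_sup0_ubound Sy).
Qed.

Lemma sqr_powR_Nhalf (R : realType) (x : R) :
  (0 <= x)%R -> ((x `^ (- 2^-1)) ^+ 2 = x^-1)%R.
Proof. by move=> x0; rewrite powRN powR12_sqrt // exprVn sqr_sqrtr. Qed.

Section model_bounds.
Context d d' (Pi : measurableType d) (O : measurableType d') (R : realType).
Implicit Types (M Mbar : model Pi O R) (pi : Pi).

Lemma fM_ge0_le1 M pi : 0 <= fM M pi <= 1.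
Proof.
apply: ae_unit_interval_integral; first exact: measurable_fst.
pose A := [set z : R * O | (0 <= z.1 <= 1)%R].
have mA : measurable A.
  have -> : A = setT `&` (fst @^-1` `[0%R, 1%R]).
    by apply/seteqP; split => z /=; rewrite in_itv //= => -[].
  exact: measurable_fst _ (measurable_itv _).
exists (~` A); split => //; first exact: measurableC.
by rewrite probability_setC // model_reward01 subee.
Qed.

Lemma gM_ge0_le1 M pi : 0 <= gM M pi <= 1.
Proof.
have fM01 := fM_ge0_le1 M.
have sup_ge : fM M pi <= ereal_sup (range (fM M)) by apply: ereal_sup_ubound; exists pi.
have sup_le1 : ereal_sup (range (fM M)) <= 1.
  by apply: ge_ereal_sup => _ [x _ <-]; case/andP: (fM01 x).
rewrite /gM; move: sup_ge sup_le1 (fM01 pi).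
case: (ereal_sup _) => [s| |]; case: (fM M pi) => [f| |] //=.
by rewrite !lee_fin => ? ? /andP[? ?]; apply/andP; split; lra.
Qed.

Lemma hellM_ge0 M Mbar pi : 0 <= hellM M Mbar pi.
Proof. by apply: integral_ge0 => x _; rewrite lee_fin sqr_ge0. Qed.

End model_bounds.

Theorem proposition4p3 (R : realType) (d d' : measure_display)
  (Pi : measurableType d) (O : measurableType d')
  (MM : set (model Pi O R)) (gamma : R) (Mbar : model Pi O R) :
  (0 < gamma)%R ->
  dec_o gamma MM Mbar <= dec_c (gamma `^ (- 2^-1))%R MM Mbar.
Proof.
move=> g0; rewrite /dec_o /dec_c (sqr_powR_Nhalf (ltW g0)).
apply: le_ereal_inf_tmp => _ [p _ <-].
apply: le_trans (ereal_inf_lbound _) _; first by exists p.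
apply: ge_ereal_sup => _ [M MM_M <-] /=.
have gM01 := gM_ge0_le1 M; have hM0 := hellM_ge0 M Mbar.
have [h_le|h_gt] := leP (\int[p]_pi hellM M Mbar pi) (gamma^-1)%:E.
- apply: le_trans _ (ereal_sup0_ubound _); last by exists M.
  apply: le_integral_pointwise => pi _; rewrite -[leRHS]sube0.
  by apply: leeB => //; apply: mule_ge0 (hM0 pi); rewrite lee_fin ltW.
- apply: le_trans _ (ereal_sup0_ge0 _).
    by apply: (integral_offset_le0 g0 _ hM0 h_gt) => pi; case/andP: (gM01 pi).
  move=> _ [M' _ <-]; apply: integral_ge0 => pi _.
  by case/andP: (gM_ge0_le1 M' pi).
Qed.
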